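(* Let $b,c$ be rational numbers with $0<b\le b_\sigma$. For each $u\in\mathbf{Z}^n_{\ge0}$ with $0\le u_i<q$ for all $i$, the basic Dwork operator $\Theta_u$ satisfies $\Theta_u(L(b,c))\subseteq L(qb,c)$. In particular, each $\Theta_u$ maps $A$ into $A$.
   Context: $R$ is a complete discrete valuation ring of characteristic $0$ with uniformizer $\pi$, residue field $\mathbf{F}_q$ ($q$ a power of $p$), valuation $\mathrm{ord}_\pi$. Fix $n\ge1$; for $u\in\mathbf{Z}^n_{\ge0}$, $X^u=\prod X_i^{u_i}$, $|u|=\sum u_i$. $A_0=\{\sum a_uX^u:a_u\in R,\ \mathrm{ord}_\pi a_u\to\infty\}$, $A=\{\sum a_uX^u\in A_0:\liminf_{|u|\to\infty}\mathrm{ord}_\pi a_u/|u|>0\}$. $\sigma$ is an $R$-algebra endomorphism of $A_0$ with $\sigma(X_i)=X_i^q+\pi f_i$, $f_i\in A$. For rational $b>0$ and $c$, $L(b,c)=\{\sum_va_vX^v:a_v\in R,\ \mathrm{ord}_\pi a_v\ge b|v|+c\}$. $b_\sigma>0$ is a fixed rational number with $\pi f_i\in L(b_\sigma,0)$ for $1\le i\le n$. The ring $A_0$ is a free $\sigma(A_0)$-module with basis $\{X^u:0\le u_i<q\}$, so every $f\in A_0$ is uniquely $f=\sum_{0\le u_i<q}\sigma(\Theta_u(f))X^u$ with $\Theta_u(f)\in A_0$; these maps $\Theta_u$ are the basic Dwork operators. *)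

From mathcomp Require Import all_boot all_order all_algebra.
Set Implicit Arguments. Unset Strict Implicit. Unset Printing Implicit Defensive.
Import Order.TTheory GRing.Theory Num.Theory.
Local Open Scope ring_scope.

Definition rdvd (R : comNzRingType) (y x : R) : Prop := exists r : R, x = y * r.

(* v is the normalized pi-adic valuation on nonzero elements:
   every nonzero a is pi^(v a) times a unit; pi is a nonzero non-unit. *)
Definition is_cdvr (R : idomainType) (v : R -> nat) (pi : R) (q : nat) : Prop :=
  [/\ pi != 0 /\ ~~ (pi \is a GRing.unit),
      (forall a : R, a != 0 -> exists w : R, w \is a GRing.unit /\ a = pi ^+ v a * w),
      [pchar R] =i pred0,
      (* pi-adic completeness *)
      (forall s : nat -> R, (forall k, rdvd (pi ^+ k) (s k.+1 - s k)) ->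
          exists l : R, forall k, rdvd (pi ^+ k) (l - s k))
    & (* residue field R / pi R has exactly q elements *)
      exists s : seq R, [/\ size s = q,
         (forall i j, (i < q)%N -> (j < q)%N -> rdvd pi (s`_i - s`_j) -> i = j)
       & forall a : R, exists2 i, (i < q)%N & rdvd pi (a - s`_i)] ].

(* ord_pi a >= x  (with ord_pi 0 = +oo), for rational x *)
Definition ordge (R : idomainType) (v : R -> nat) (a : R) (x : rat) : Prop :=
  a = 0 \/ x <= (v a)%:R.

Definition mon (n : nat) := {ffun 'I_n -> nat}.
Definition deg (n : nat) (u : mon n) : nat := (\sum_(i < n) u i)%N.
Definition series (R : Type) (n : nat) := mon n -> R.

Definition sadd (R : idomainType) n (f g : series R n) : series R n := fun u => f u + g u.
Definition sscale (R : idomainType) n (a : R) (f : series R n) : series R n := fun u => a * f u.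
Definition sX (R : idomainType) n (u : mon n) : series R n := fun w => (w == u)%:R.
(* Cauchy product: (fg)_w = sum_{u <= w} f_u g_{w-u} *)
Definition smul (R : idomainType) n (f g : series R n) : series R n := fun w =>
  \sum_(t : {ffun 'I_n -> 'I_(deg w).+1} | [forall i, (t i <= w i)%N])
     f [ffun i => nat_of_ord (t i)] * g [ffun i => (w i - t i)%N].

Definition emon n (i : 'I_n) (k : nat) : mon n := [ffun j => if j == i then k else 0%N].

Definition inA0 (R : idomainType) (v : R -> nat) n (f : series R n) : Prop :=
  forall N : nat, exists M : nat, forall u : mon n, (M <= deg u)%N -> ordge v (f u) N%:R.

(* A : A_0 and liminf_{|u|->oo} ord a_u / |u| > 0 *)
Definition inA (R : idomainType) (v : R -> nat) n (f : series R n) : Prop :=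
  inA0 v f /\
  exists2 eps : rat, 0 < eps & exists M : nat, forall u : mon n,
    (M <= deg u)%N -> ordge v (f u) (eps * (deg u)%:R).

Definition inL (R : idomainType) (v : R -> nat) n (b c : rat) (f : series R n) : Prop :=
  forall u : mon n, ordge v (f u) (b * (deg u)%:R + c).

Definition mon0 n : mon n := [ffun _ => 0%N].

Definition is_frob (R : idomainType) (v : R -> nat) (pi : R) (q n : nat)
    (sigma : series R n -> series R n) (fs : 'I_n -> series R n) : Prop :=
  [/\ (forall f, inA0 v f -> inA0 v (sigma f)) /\
      (forall f g, inA0 v f -> inA0 v g -> sigma (sadd f g) =1 sadd (sigma f) (sigma g)),
      (forall (a : R) f, inA0 v f -> sigma (sscale a f) =1 sscale a (sigma f)),
      (forall f g, inA0 v f -> inA0 v g -> sigma (smul f g) =1 smul (sigma f) (sigma g)),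
      sigma (sX R (mon0 n)) =1 sX R (mon0 n) /\ (forall i, inA v (fs i))
    & forall i, sigma (sX R (emon i 1)) =1 sadd (sX R (emon i q)) (sscale pi (fs i))].

Definition boxmon n q (d : {ffun 'I_n -> 'I_q}) : mon n := [ffun i => nat_of_ord (d i)].

Definition dwork_sum (R : idomainType) n q (sigma : series R n -> series R n)
    (g : {ffun 'I_n -> 'I_q} -> series R n) : series R n := fun w =>
  \sum_(d : {ffun 'I_n -> 'I_q}) smul (sigma (g d)) (sX R (boxmon d)) w.

(* g = (Theta_u f)_u : the (unique) family in A_0 with f = sum_u sigma(g_u) X^u *)
Definition is_dwork_decomp (R : idomainType) (v : R -> nat) n q
    (sigma : series R n -> series R n) (f : series R n)
    (g : {ffun 'I_n -> 'I_q} -> series R n) : Prop :=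
  (forall d, inA0 v (g d)) /\ f =1 dwork_sum sigma g.

From mathcomp Require Import all_boot all_order all_algebra.
From mathcomp Require Import ring lra zify.
From Stdlib Require Import FunctionalExtensionality IndefiniteDescription.
Import Order.TTheory GRing.Theory Num.Theory.
Set Implicit Arguments. Unset Strict Implicit. Unset Printing Implicit Defensive.
Local Open Scope ring_scope.

(* Write f = sum_d sigma(g_d) X^d.  In sum_d g_d(X^q) X^d the coefficient of X^(q y + d0) is
   exactly g_d0(y), so g_d0(y) is the coefficient of f at X^(q y + d0) minus that of
   sum_d (sigma(g_d) - g_d(X^q)) X^d.  By induction on |t| from sigma(X_i) = X_i^q + pi f_i,
   the defects sigma(X^t) - X^(q t) lie in L(b, q b - q b |t|) and in pi A_0.  Hence if every
   g_d lies in L(q b, b |d| + c) modulo pi^K, the identity puts g_d0 there modulo pi^(K+1),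
   and letting K grow gives g_d0 in L(q b, c).  As sigma is only known to be additive, a
   series is first split into a polynomial plus pi^K times a series.  The claim about A
   follows because A consists of the elements of A_0 lying in some L(b', c') with b' > 0,
   and b' may be taken <= b_sigma. *)

Definition pi_valuation (R : idomainType) (v : R -> nat) (pi : R) : Prop :=
  [/\ pi != 0, pi \isn't a GRing.unit &
      forall a : R, a != 0 -> exists w : R, w \is a GRing.unit /\ a = pi ^+ v a * w].

Section Valuation.
Variables (R : idomainType) (v : R -> nat).

Lemma ordge_le (a : R) (x y : rat) : x <= y -> ordge v a y -> ordge v a x.
Proof. by move=> xy [->|h]; [left|right; apply: le_trans h]. Qed.

Lemma ordge_le0 (a : R) (x : rat) : x <= 0 -> ordge v a x.
Proof. by move=> h; right; apply: le_trans h _. Qed.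

Lemma ordge_min (a : R) (x y : rat) :
  ordge v a (Order.min x y) -> ordge v a x \/ ordge v a y.
Proof. by case=> [->|]; [left; left | rewrite ge_min => /orP[]; [left|right]; right]. Qed.

Variable pi : R.
Hypothesis hv : pi_valuation v pi.

Lemma dvd_leq_valuation (a r : R) (k : nat) : a != 0 -> a = pi ^+ k * r -> (k <= v a)%N.
Proof.
case: hv => _ pi_nunit hdec a0 ak; have [w [wu aw]] := hdec a a0.
rewrite leqNgt; apply/negP => lt.
have pv0 : pi ^+ v a != 0 by apply: contraNneq a0 => e; rewrite aw e mul0r.
have e : pi ^+ v a * w = pi ^+ v a * (pi * (pi ^+ (k - (v a).+1) * r)).
  rewrite -aw {1}ak !mulrA -exprSr -exprD; congr (_ * r); congr (pi ^+ _); lia.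
move/negP: pi_nunit; apply; apply/unitrPr; exists (pi ^+ (k - (v a).+1) * r * w^-1).
by rewrite !mulrA -[pi * _ * r]mulrA -(mulfI pv0 e) divrr.
Qed.

Lemma ordgeP (a : R) (x : rat) :
  ordge v a x <-> a = 0 \/ exists k : nat, x <= k%:R /\ rdvd (pi ^+ k) a.
Proof.
split=> [[->|h]|[->|[k [xk [r ar]]]]]; try by left.
- have [->|a0] := eqVneq a 0; first by left.
  by right; exists (v a); split => //; case: hv => _ _ /(_ a a0) [w [_ aw]]; exists w.
- have [->|a0] := eqVneq a 0; first by left.
  by right; apply: (le_trans xk); rewrite ler_nat (dvd_leq_valuation a0 ar).
Qed.

Lemma ordge_exp (k : nat) (r : R) : ordge v (pi ^+ k * r) k%:R.
Proof. by apply/ordgeP; right; exists k; split => //; exists r. Qed.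

Lemma ordgeM (a e : R) (x y : rat) :
  ordge v a x -> ordge v e y -> ordge v (a * e) (x + y).
Proof.
move=> /ordgeP[->|[k [xk [r ->]]]]; first by rewrite mul0r; left.
move=> /ordgeP[->|[m [ym [s ->]]]]; first by rewrite mulr0; left.
apply/ordgeP; right; exists (k + m)%N; split; first by rewrite natrD lerD.
by exists (r * s); rewrite exprD; ring.
Qed.

Lemma ordgeD (a e : R) (x : rat) : ordge v a x -> ordge v e x -> ordge v (a + e) x.
Proof.
move=> /ordgeP[->|[k [xk [r ->]]]]; first by rewrite add0r.
move=> /ordgeP[->|[m [ym [s ->]]]]; first by rewrite addr0; apply: ordge_le (ordge_exp _ _).
apply/ordgeP; right; exists (minn k m); split; first by case: leqP.
exists (pi ^+ (k - minn k m) * r + pi ^+ (m - minn k m) * s).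
by rewrite mulrDr !mulrA -!exprD; congr (pi ^+ _ * _ + pi ^+ _ * _); lia.
Qed.

Lemma ordgeN (a : R) (x : rat) : ordge v a x -> ordge v (- a) x.
Proof. by move=> h; rewrite -mulN1r -[x]add0r; apply: ordgeM h; apply: ordge_le0. Qed.

Lemma ordgeB (a e : R) (x : rat) : ordge v a x -> ordge v e x -> ordge v (a - e) x.
Proof. by move=> ha he; apply: ordgeD ha (ordgeN he). Qed.

Lemma ordge_sum (I : Type) (s : seq I) (P : pred I) (F : I -> R) (x : rat) :
  (forall i, P i -> ordge v (F i) x) -> ordge v (\sum_(i <- s | P i) F i) x.
Proof.
by move=> h; apply: (big_ind (fun y => ordge v y x)) => //; [left | move=> ? ?; apply: ordgeD].
Qed.

Lemma ordge_dvd (a : R) (N : nat) : ordge v a N%:R -> rdvd (pi ^+ N) a.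
Proof.
move=> /ordgeP[->|[k [Nk [r ->]]]]; first by exists 0; rewrite mulr0.
exists (pi ^+ (k - N) * r); rewrite mulrA -exprD; congr (pi ^+ _ * _).
by move: Nk; rewrite ler_nat; lia.
Qed.

Lemma ordge_expK (r : R) (N N' : nat) :
  ordge v (pi ^+ N * r) (N + N')%:R -> ordge v r N'%:R.
Proof.
case: hv => pi0 _ _ /ordge_dvd[s]; rewrite exprD -mulrA => /(mulfI (expf_neq0 _ pi0)) ->.
exact: ordge_exp.
Qed.

End Valuation.

Section Monomials.
Context {n : nat}.
Implicit Types (a u w : mon n) (i : 'I_n).

Definition madd a u : mon n := [ffun i => (a i + u i)%N].
Definition msub a u : mon n := [ffun i => (a i - u i)%N].
Definition mscale (k : nat) a : mon n := [ffun i => (k * a i)%N].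

Lemma deg_madd a u : deg (madd a u) = (deg a + deg u)%N.
Proof. by rewrite /deg -big_split; apply: eq_bigr => i _; rewrite ffunE. Qed.

Lemma deg_mscale k a : deg (mscale k a) = (k * deg a)%N.
Proof. by rewrite /deg big_distrr; apply: eq_bigr => i _; rewrite ffunE. Qed.

Lemma deg_msub a u : [forall i, u i <= a i]%N -> (deg (msub a u) + deg u)%N = deg a.
Proof.
by move/forallP=> h; rewrite /deg -big_split; apply: eq_bigr => i _; rewrite ffunE /= subnK.
Qed.

Lemma leq_deg a i : (a i <= deg a)%N.
Proof. by rewrite /deg (bigD1 i) //= leq_addr. Qed.

Lemma deg_emon i k : deg (emon i k) = k.
Proof.
rewrite /deg (bigD1 i) //= big1 ?addn0 ?ffunE ?eqxx // => j /negbTE ji.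
by rewrite ffunE ji.
Qed.

Lemma mscale_madd k a u : mscale k (madd a u) = madd (mscale k a) (mscale k u).
Proof. by apply/ffunP => i; rewrite !ffunE mulnDr. Qed.

Lemma mscale_emon k i : mscale k (emon i 1) = emon i k.
Proof. by apply/ffunP => j; rewrite !ffunE; case: eqP; rewrite ?muln1 ?muln0. Qed.

Lemma deg_eq0 u : deg u = 0%N -> u = mon0 n.
Proof. by move=> du; apply/ffunP => i; rewrite ffunE; apply/eqP; rewrite -leqn0 -du leq_deg. Qed.

Lemma deg_eqS u k : deg u = k.+1 -> exists i u', u = madd u' (emon i 1) /\ deg u' = k.
Proof.
move=> du; have [i ui] : exists i, (0 < u i)%N.
  case: (pickP (fun i => 0 < u i)%N) => [i ui|h]; first by exists i.
  by move: du; rewrite /deg big1 // => j _; move/negbT: (h j); rewrite lt0n negbK => /eqP.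
pose u' : mon n := [ffun j => (u j - (j == i))%N].
have ue : u = madd u' (emon i 1).
  apply/ffunP => j; rewrite !ffunE.
  by case: eqP => [->|_]; rewrite ?subn1 ?addn1 ?prednK ?subn0 ?addn0.
by exists i, u'; split => //; move: du; rewrite ue deg_madd deg_emon addn1 => -[].
Qed.

Lemma eq_mscale q w u : (0 < q)%N ->
  (w == mscale q u) = [forall i, q %| w i]%N && ([ffun i => (w i %/ q)%N] == u).
Proof.
move=> q_gt0; apply/eqP/andP => [->|[/forallP dv /eqP <-]].
  split; first by apply/forallP => i; rewrite ffunE dvdn_mulr.
  by apply/eqP/ffunP => i; rewrite !ffunE mulKn.
by apply/ffunP => i; rewrite !ffunE mulnC divnK.
Qed.

End Monomials.

Section SeriesAlgebra.
Context (R : idomainType) {n : nat}.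
Implicit Types (f g h : series R n) (u w : mon n).

Lemma eq_smul f f' g g' w : f =1 f' -> g =1 g' -> smul f g w = smul f' g' w.
Proof. by move=> hf hg; apply: eq_bigr => t _; rewrite hf hg. Qed.

Lemma smulDl f g h w : smul (sadd f g) h w = smul f h w + smul g h w.
Proof. by rewrite /smul -big_split; apply: eq_bigr => t _; rewrite mulrDl. Qed.

Lemma smulDr f g h w : smul h (sadd f g) w = smul h f w + smul h g w.
Proof. by rewrite /smul -big_split; apply: eq_bigr => t _; rewrite mulrDr. Qed.

Lemma smul_sXr f u w :
  smul f (sX R u) w = if [forall i, u i <= w i]%N then f (msub w u) else 0.
Proof.
rewrite /smul /sX; case: ifP => [/forallP hu|/negbT hu]; last first.
  apply: big1 => t _; case: eqP => [e|_]; last by rewrite mulr0.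
  by case/negP: hu; apply/forallP => i; rewrite -e ffunE leq_subr.
have lt i : (w i - u i < (deg w).+1)%N by rewrite ltnS (leq_trans (leq_subr _ _) (leq_deg _ _)).
pose t0 : {ffun 'I_n -> 'I_(deg w).+1} := [ffun i => Ordinal (lt i)].
rewrite (bigD1 t0) /=; last by apply/forallP => i; rewrite ffunE leq_subr.
rewrite big1 ?addr0 => [|t /andP[/forallP ht /eqP nt]].
  have -> : [ffun i => (w i - t0 i)%N] = u by apply/ffunP => i; rewrite !ffunE subKn.
  by rewrite eqxx mulr1; congr f; apply/ffunP => i; rewrite !ffunE.
case: eqP => [e|_]; last by rewrite mulr0.
case: nt; apply/ffunP => i; apply/val_inj; rewrite ffunE /= -e ffunE subKn //.
Qed.

Lemma smul_sX u u' w : smul (sX R u) (sX R u') w = sX R (madd u u') w.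
Proof.
rewrite smul_sXr /sX; case: ifP => [/forallP h|/negbT h].
  suff -> : (msub w u' == u) = (w == madd u u') by [].
  apply/idP/idP => /eqP e; apply/eqP/ffunP => i.
    by rewrite -e !ffunE /= subnK.
  by rewrite e !ffunE addnK.
case: eqP => // e; case/negP: h; apply/forallP => i; by rewrite e ffunE leq_addl.
Qed.

Definition spoly (I : Type) (s : seq I) (a : I -> R) (m : I -> mon n) : series R n :=
  fun w => \sum_(t <- s) a t * sX R (m t) w.

Lemma spoly_box M h y :
  spoly (index_enum {ffun 'I_n -> 'I_M}) (fun t => h (boxmon t)) (@boxmon n M) y
  = if [forall i, y i < M]%N then h y else 0.
Proof.
rewrite /spoly /sX; case: ifP => [/forallP hy|/negbT hy]; last first.
  apply: big1 => t _; case: eqP => [e|_]; last by rewrite mulr0.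
  by case/negP: hy; apply/forallP => i; rewrite e ffunE.
pose t0 : {ffun 'I_n -> 'I_M} := [ffun i => Ordinal (hy i)].
have t0y : boxmon t0 = y by apply/ffunP => i; rewrite !ffunE.
rewrite (bigD1 t0) //= big1 ?addr0 => [|t nt]; first by rewrite t0y eqxx mulr1.
case: eqP => [e|_]; last by rewrite mulr0.
case/eqP: nt; apply/ffunP => i; apply/val_inj.
by move: (congr1 (fun m : mon n => m i) e); rewrite !ffunE /= => ->.
Qed.

(* h(X_1^q, ..., X_n^q) *)
Definition sinflate (q : nat) h : series R n := fun x =>
  if [forall i, q %| x i]%N then h [ffun i => (x i %/ q)%N] else 0.

Lemma sinflate_spoly q (I : Type) (s : seq I) (a : I -> R) (m : I -> mon n) x :
  (0 < q)%N -> sinflate q (spoly s a m) x = spoly s a (fun t => mscale q (m t)) x.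
Proof.
move=> q_gt0; rewrite /sinflate /spoly /sX.
under [RHS]eq_bigr do rewrite eq_mscale //.
by case: ifP => //= _; rewrite big1 // => t _; rewrite mulr0.
Qed.

Lemma dwork_sum_sinflate q (g : {ffun 'I_n -> 'I_q} -> series R n) y d0 :
  (0 < q)%N -> dwork_sum (sinflate q) g (madd (mscale q y) (boxmon d0)) = g d0 y.
Proof.
move=> q_gt0; rewrite /dwork_sum (bigD1 d0) //= big1 ?addr0 => [|d nd].
  rewrite smul_sXr ifT; last by apply/forallP => i; rewrite !ffunE leq_addl.
  have -> : msub (madd (mscale q y) (boxmon d0)) (boxmon d0) = mscale q y.
    by apply/ffunP => i; rewrite !ffunE addnK.
  rewrite /sinflate ifT; last by apply/forallP => i; rewrite ffunE dvdn_mulr.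
  by congr g; apply/ffunP => i; rewrite !ffunE mulKn.
rewrite smul_sXr /sinflate; case: ifP => // /forallP le; case: ifP => // /forallP dv.
case/eqP: nd; apply/ffunP => i; apply/val_inj.
move: (le i) (dv i); rewrite !ffunE => lei /dvdnP[k hk].
have e : (q * y i + d0 i)%N = (k * q + d i)%N by rewrite -hk subnK.
by have := congr1 (modn^~ q) e; rewrite /= mulnC !modnMDl !modn_small.
Qed.

End SeriesAlgebra.

Section SeriesGrowth.
Context (R : idomainType) (v : R -> nat) {n : nat}.
Implicit Types (f g h : series R n) (u w : mon n).

Lemma inL_le (b b' c c' : rat) f : 0 <= b' <= b -> c' <= c -> inL v b c f -> inL v b' c' f.
Proof.
move=> /andP[b'0 bb'] cc' hf u; apply: ordge_le (hf u).
by apply: lerD cc'; rewrite ler_wpM2r ?ler0n.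
Qed.

Lemma inL_sX (b : rat) u : inL v b (- (b * (deg u)%:R)) (sX R u).
Proof. by move=> w; rewrite /sX; case: eqP => [->|_]; [apply: ordge_le0; rewrite subrr | left]. Qed.

Lemma inA0_sX u : inA0 v (sX R u).
Proof.
move=> N; exists (deg u).+1 => w hw; rewrite /sX; case: eqP => [e|_]; last by left.
by move: hw; rewrite e ltnn.
Qed.

(* f lies in L(b, c) + pi^K A_0 *)
Definition inL_mod (K : nat) (b c : rat) f : Prop :=
  forall u, ordge v (f u) (Order.min (b * (deg u)%:R + c) K%:R).

Lemma inL_mod0 b c f : inL_mod 0 b c f.
Proof. by move=> u; apply: ordge_le0; rewrite ge_min lexx orbT. Qed.

Lemma inL_mod_inL b c f : (forall K, inL_mod K b c f) -> inL v b c f.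
Proof.
move=> hf u; case: (hf (v (f u)).+1 u) => [->|]; first by left.
by rewrite ge_min => /orP[]; [right | rewrite ler_nat ltnn].
Qed.

Lemma inA_inL f : inA v f ->
  exists2 eps : rat, 0 < eps & forall b, 0 <= b <= eps -> exists c, inL v b c f.
Proof.
case=> _ [eps eps_gt0 [M hM]]; exists eps => // b /andP[b_ge0 b_le_eps].
exists (- (b * M%:R)) => u; case: (leqP M (deg u)) => hu.
  apply: ordge_le (hM u hu).
  have : b * (deg u)%:R <= eps * (deg u)%:R by rewrite ler_wpM2r ?ler0n.
  have : 0 <= b * M%:R by rewrite mulr_ge0 ?ler0n.
  by lra.
apply: ordge_le0.
have : b * (deg u)%:R <= b * M%:R by rewrite ler_wpM2l // ler_nat ltnW.
by lra.
Qed.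

Lemma inL_inA (b c : rat) f : 0 < b -> inA0 v f -> inL v b c f -> inA v f.
Proof.
move=> b_gt0 fA0 hf; split => //; exists (b / 2); first by rewrite divr_gt0.
exists (Num.truncn (- (2 * c) / b)).+1 => u hu; apply: ordge_le (hf u).
have : - (2 * c) / b < (deg u)%:R by apply: lt_le_trans (truncnS_gt _) _; rewrite ler_nat.
by rewrite ltr_pdivrMr //; lra.
Qed.

Variable pi : R.
Hypothesis hv : pi_valuation v pi.

Lemma inL_smul (b c1 c2 : rat) f g :
  inL v b c1 f -> inL v b c2 g -> inL v b (c1 + c2) (smul f g).
Proof.
move=> hf hg w; apply: (ordge_sum hv) => t /forallP ht.
apply: ordge_le (ordgeM hv (hf _) (hg _)).
have -> : (deg w)%:R =
    (deg [ffun i => (w i - t i)%N])%:R + (deg [ffun i => nat_of_ord (t i)])%:R :> rat.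
  rewrite -natrD; congr (_%:R); rewrite /deg -big_split.
  by apply: eq_bigr => i _; rewrite !ffunE /= subnK.
lra.
Qed.

Lemma inL_sscale_pi f : inL v 0 1 (sscale pi f).
Proof. by move=> u; rewrite mul0r add0r /sscale -[pi]expr1; apply: ordge_exp. Qed.

Lemma inA0D f g : inA0 v f -> inA0 v g -> inA0 v (sadd f g).
Proof.
move=> hf hg N; have [M1 h1] := hf N; have [M2 h2] := hg N.
exists (maxn M1 M2) => u hu; apply: (ordgeD hv).
  by apply: h1; apply: leq_trans hu; apply: leq_maxl.
by apply: h2; apply: leq_trans hu; apply: leq_maxr.
Qed.

Lemma inA0Z (a : R) f : inA0 v f -> inA0 v (sscale a f).
Proof.
move=> hf N; have [M h] := hf N; exists M => u /h hu.
by rewrite /sscale -[N%:R]add0r; apply: (ordgeM hv (ordge_le0 v a (lexx 0)) hu).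
Qed.

Lemma inA0_spoly (I : Type) (s : seq I) (a : I -> R) (m : I -> mon n) :
  inA0 v (spoly s a m).
Proof.
elim: s => [|t s IH].
  by move=> N; exists 0%N => u _; rewrite /spoly big_nil; left.
have -> : spoly (t :: s) a m = sadd (sscale (a t) (sX R (m t))) (spoly s a m).
  by apply: functional_extensionality => w; rewrite /spoly big_cons.
exact/inA0D/IH/inA0Z/inA0_sX.
Qed.

Lemma inA0_split h (N : nat) : inA0 v h ->
  exists M, exists2 h', inA0 v h' & forall y, h y =
    spoly (index_enum {ffun 'I_n -> 'I_M}) (fun t => h (boxmon t)) (@boxmon n M) y
    + pi ^+ N * h' y.
Proof.
move=> hA0; have [M hM] := hA0 N; exists M.
have tail (y : mon n) : exists r : R, ~~ [forall i, y i < M]%N -> h y = pi ^+ N * r.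
  case: (boolP [forall i, y i < M]%N) => [_|]; first by exists 0.
  rewrite negb_forall => /existsP[i]; rewrite -leqNgt => Mi.
  by have [r ->] := ordge_dvd hv (hM y (leq_trans Mi (leq_deg y i))); exists r.
have [r hr] := functional_choice _ tail.
exists (fun y : mon n => if [forall i, y i < M]%N then 0 else r y) => [N'|y].
  have [M' hM'] := hA0 (N + N')%N; exists M' => y /hM'.
  by case: ifP => [_ _|/negbT/hr ->]; [left | apply: ordge_expK].
by rewrite spoly_box; case: ifP => [_|/negbT/hr]; rewrite ?mulr0 ?addr0 ?add0r.
Qed.

End SeriesGrowth.

Definition sigma_defect (R : idomainType) (n : nat) (sigma : series R n -> series R n)
    (q : nat) (u : mon n) : series R n :=
  fun x => sigma (sX R u) x - sX R (mscale q u) x.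

Section Frobenius.
Variables (R : idomainType) (v : R -> nat) (pi : R) (q n : nat).
Variables (sigma : series R n -> series R n) (fs : 'I_n -> series R n).
Hypothesis hv : pi_valuation v pi.
Hypothesis frob : is_frob v pi q sigma fs.
Implicit Types (f g h : series R n) (u : mon n).

Let sigmaD f g : inA0 v f -> inA0 v g -> sigma (sadd f g) =1 sadd (sigma f) (sigma g).
Proof. by case: frob => [[_ hD] _ _ _ _]; apply: hD. Qed.

Let sigmaZ (a : R) f : inA0 v f -> sigma (sscale a f) =1 sscale a (sigma f).
Proof. by case: frob => _ hZ _ _ _; apply: hZ. Qed.

Let sigmaM f g : inA0 v f -> inA0 v g -> sigma (smul f g) =1 smul (sigma f) (sigma g).
Proof. by case: frob => _ _ hM _ _; apply: hM. Qed.

Let sigmaX i : sigma (sX R (emon i 1)) =1 sadd (sX R (emon i q)) (sscale pi (fs i)).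
Proof. by case: frob => _ _ _ _ hX; apply: hX. Qed.

Let D := sigma_defect sigma q.

Lemma sigma_defect0 x : D (mon0 n) x = 0.
Proof.
case: frob => _ _ _ [sigma1 _] _; rewrite /D /sigma_defect sigma1.
have -> : mscale q (mon0 n) = mon0 n by apply/ffunP => i; rewrite !ffunE muln0.
exact: subrr.
Qed.

Lemma sigma_defectS u i x :
  D (madd u (emon i 1)) x = smul (sX R (mscale q u)) (sscale pi (fs i)) x
    + smul (D u) (sX R (emon i q)) x + smul (D u) (sscale pi (fs i)) x.
Proof.
have sigmaXu : sigma (sX R u) =1 sadd (sX R (mscale q u)) (D u).
  by move=> w; rewrite /sadd /D /sigma_defect addrC subrK.
rewrite {1}/D /sigma_defect.
have -> : sX R (madd u (emon i 1)) = smul (sX R u) (sX R (emon i 1)).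
  by apply: functional_extensionality => w; rewrite smul_sX.
rewrite (sigmaM (inA0_sX v _) (inA0_sX v _)) (eq_smul x sigmaXu (sigmaX i)).
rewrite smulDl !smulDr smul_sX mscale_madd mscale_emon; ring.
Qed.

Lemma inL_sigma_defect (b e : rat) : 0 <= b -> 0 <= e ->
  (forall i, inL v b e (sscale pi (fs i))) ->
  forall u, inL v b (e + q%:R * b - q%:R * b * (deg u)%:R) (D u).
Proof.
move=> b_ge0 e_ge0 hfs u; have [k du] : exists k, deg u = k by exists (deg u).
elim: k u du => [|k IH] u du.
  by rewrite (deg_eq0 du) => x; rewrite sigma_defect0; left.
have [i [u' [-> du']]] := deg_eqS du.
have qb_ge0 : 0 <= q%:R * b by rewrite mulr_ge0 ?ler0n.
have hXq : inL v b (- (q%:R * b * (deg u')%:R)) (sX R (mscale q u')).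
  have -> : q%:R * b * (deg u')%:R = b * (deg (mscale q u'))%:R.
    by rewrite deg_mscale natrM; ring.
  exact: inL_sX.
have hXi : inL v b (- (q%:R * b)) (sX R (emon i q)).
  by rewrite -{1}(deg_emon i q) mulrC; apply: inL_sX.
move=> x; rewrite sigma_defectS deg_madd deg_emon natrD.
apply: (ordgeD hv); first apply: (ordgeD hv).
- by apply: ordge_le (inL_smul hv hXq (hfs i) x); lra.
- by apply: ordge_le (inL_smul hv (IH u' du') hXi x); lra.
- by apply: ordge_le (inL_smul hv (IH u' du') (hfs i) x); lra.
Qed.

Lemma sigma_spoly (I : Type) (s : seq I) (a : I -> R) (m : I -> mon n) x :
  sigma (spoly s a m) x = \sum_(t <- s) a t * sigma (sX R (m t)) x.
Proof.
elim: s x => [|t s IH] x.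
  have -> : spoly [::] a m = sscale 0 (sX R (mon0 n)).
    by apply: functional_extensionality => w; rewrite /spoly /sscale big_nil mul0r.
  by rewrite (sigmaZ _ (inA0_sX v _)) /sscale mul0r big_nil.
have -> : spoly (t :: s) a m = sadd (sscale (a t) (sX R (m t))) (spoly s a m).
  by apply: functional_extensionality => w; rewrite /spoly big_cons.
rewrite (sigmaD (inA0Z hv _ (inA0_sX v _)) (inA0_spoly hv _ _ _)) /sadd.
by rewrite (sigmaZ _ (inA0_sX v _)) /sscale IH big_cons.
Qed.

Lemma sigma_sub_sinflate_spoly (I : Type) (s : seq I) (a : I -> R) (m : I -> mon n) x :
  (0 < q)%N -> sigma (spoly s a m) x - sinflate q (spoly s a m) x
             = \sum_(t <- s) a t * D (m t) x.
Proof.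
move=> q_gt0; rewrite sigma_spoly sinflate_spoly // /spoly -sumrB.
by apply: eq_bigr => t _; rewrite -mulrBr.
Qed.

Variable b : rat.
Hypotheses (b_ge0 : 0 <= b) (hfs : forall i, inL v b 0 (sscale pi (fs i))).
Hypothesis q_gt0 : (0 < q)%N.

Lemma inL_mod_sigma_sub_sinflate K (beta : rat) h : inA0 v h ->
  inL_mod v K (q%:R * b) beta h ->
  inL_mod v K.+1 b (beta + q%:R * b) (fun x => sigma h x - sinflate q h x).
Proof.
move=> hA0 hh x.
have [M [h' h'A0 hsplit]] := inA0_split hv K.+1 hA0.
set P := spoly _ _ _ in hsplit.
have PA0 : inA0 v P := inA0_spoly hv _ _ _.
have -> : h = sadd P (sscale (pi ^+ K.+1) h').
  by apply: functional_extensionality => y; rewrite hsplit.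
rewrite (sigmaD PA0 (inA0Z hv _ h'A0)) /sadd (sigmaZ _ h'A0) /sscale.
have -> : sinflate q (fun y => P y + pi ^+ K.+1 * h' y) x
          = sinflate q P x + pi ^+ K.+1 * sinflate q h' x.
  by rewrite /sinflate; case: ifP; rewrite ?mulr0 ?addr0.
rewrite opprD addrACA -mulrBr; apply: (ordgeD hv); last first.
  by apply: ordge_le (ordge_exp hv _ _); rewrite ge_min lexx orbT.
rewrite /P sigma_sub_sinflate_spoly //; apply: (ordge_sum hv) => t _.
have hDb := inL_sigma_defect b_ge0 (lexx 0) hfs (boxmon t) x.
have hDpi := inL_sigma_defect (lexx 0) ler01 (fun i => inL_sscale_pi hv (fs i)) (boxmon t) x.
case: (ordge_min (hh (boxmon t))) => ht.
  by apply: ordge_le (ordgeM hv ht hDb); rewrite ge_min; apply/orP; left; lra.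
apply: ordge_le (ordgeM hv ht hDpi); rewrite ge_min; apply/orP; right.
by rewrite -addn1 natrD !mulr0 !mul0r; lra.
Qed.

Lemma dwork_coeff_inL_mod (c : rat) f (g : {ffun 'I_n -> 'I_q} -> series R n) K :
  inL v b c f -> is_dwork_decomp v sigma f g ->
  (forall d, inL_mod v K (q%:R * b) (b * (deg (boxmon d))%:R + c) (g d)) ->
  forall d, inL_mod v K.+1 (q%:R * b) (b * (deg (boxmon d))%:R + c) (g d).
Proof.
move=> hf [gA0 fE] hg d0 y.
set w := madd (mscale q y) (boxmon d0).
have dw : deg w = (q * deg y + deg (boxmon d0))%N by rewrite deg_madd deg_mscale.
have qb_ge0 : 0 <= q%:R * b by rewrite mulr_ge0 ?ler0n.
have -> : g d0 y = f w - (dwork_sum sigma g w - dwork_sum (sinflate q) g w).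
  by rewrite fE dwork_sum_sinflate //; ring.
apply: (ordgeB hv).
  apply: ordge_le (hf w); rewrite ge_min dw natrD natrM; apply/orP; left.
  by lra.
rewrite /dwork_sum /= -sumrB; apply: (ordge_sum hv) => d _.
rewrite !smul_sXr; case: ifP => hd; last by rewrite subrr; left.
apply: ordge_le (inL_mod_sigma_sub_sinflate (gA0 d) (hg d) (msub w (boxmon d))).
have dd : (deg (msub w (boxmon d)))%:R = (deg w)%:R - (deg (boxmon d))%:R :> rat.
  by rewrite -(deg_msub hd) natrD addrK.
rewrite le_min !ge_min lexx !orbT andbT; apply/orP; left.
rewrite dd dw natrD natrM.
by lra.
Qed.

Lemma dwork_coeff_inL (c : rat) f (g : {ffun 'I_n -> 'I_q} -> series R n) :
  inL v b c f -> is_dwork_decomp v sigma f g ->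
  forall d, inL v (q%:R * b) c (g d).
Proof.
move=> hf hd d.
apply: (inL_le (b := q%:R * b) (c := b * (deg (boxmon d))%:R + c)).
- by rewrite lexx mulr_ge0 ?ler0n.
- by rewrite lerDr mulr_ge0 ?ler0n.
apply: inL_mod_inL => K; elim: K d => [|K IH] d; first exact: inL_mod0.
exact: dwork_coeff_inL_mod hf hd IH d.
Qed.

End Frobenius.

Theorem theorem4p5 (R : idomainType) (v : R -> nat) (pi : R) (q n : nat)
    (Hn : (0 < n)%N)
    (sigma : series R n -> series R n) (fs : 'I_n -> series R n) (b_sigma : rat)
    (HR : is_cdvr v pi q) (Hsigma : is_frob v pi q sigma fs)
    (Hbs : 0 < b_sigma) (Hfs : forall i, inL v b_sigma 0 (sscale pi (fs i)))
    (b c : rat) (Hb : 0 < b) (Hbb : b <= b_sigma) :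
  (forall (f : series R n) (g : {ffun 'I_n -> 'I_q} -> series R n),
      inL v b c f -> is_dwork_decomp v sigma f g ->
      forall d, inL v (q%:R * b) c (g d))
  /\
  (forall (f : series R n) (g : {ffun 'I_n -> 'I_q} -> series R n),
      inA v f -> is_dwork_decomp v sigma f g ->
      forall d, inA v (g d)).
Proof.
have hv : pi_valuation v pi by case: HR => [[pi0 pi_nunit] hdec _ _ _]; split.
have q_gt0 : (0 < q)%N.
  by case: HR => _ _ _ _ [s [_ _ /(_ 0) [i iq _]]]; apply: leq_ltn_trans iq.
have hfs b' : 0 <= b' <= b_sigma -> forall i, inL v b' 0 (sscale pi (fs i)).
  by move=> hb' i; apply: inL_le hb' (lexx 0) (Hfs i).
have b_itv : 0 <= b <= b_sigma by rewrite ltW.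
split=> [f g hf hd | f g hfA hd] d.
  exact: (dwork_coeff_inL hv Hsigma (ltW Hb) (hfs b b_itv) q_gt0 hf hd d).
have [eps eps_gt0 hfL] := inA_inL hfA.
set b' := Order.min eps b_sigma.
have b'_gt0 : 0 < b' by rewrite lt_min eps_gt0 Hbs.
have b'_itv : 0 <= b' <= b_sigma by rewrite ltW // ge_min lexx orbT.
have [c' hf'] : exists c', inL v b' c' f by apply: hfL; rewrite ltW //= ge_min lexx.
have hg := dwork_coeff_inL hv Hsigma (ltW b'_gt0) (hfs b' b'_itv) q_gt0 hf' hd d.
by apply: inL_inA (hd.1 d) hg; rewrite mulr_gt0 ?ltr0n.
Qed.
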